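(* Let $p\ge5$ be prime, $G=\mathrm{GL}_2(\mathbb{F}_p)$, and $H\subset G$ a subgroup isomorphic to the dicyclic group $\mathrm{Dic}_{12}\simeq C_3\rtimes C_4$ of order 12. Then $$N_G(H)/C(G)\simeq \mathrm{Aut}(H)\simeq D_6,$$ the first isomorphism being induced by conjugation. Moreover: (a) if $(3/p)=1$, every matrix in $N_G(H)$ has square determinant; (b) if $(3/p)=-1$, the matrices in $N_G(H)$ with square determinant are exactly those inducing inner automorphisms of $H$.
   Context: $N_G(H)$ is the normalizer of $H$ in $G$, $C(G)$ the center of $G$, $D_6$ the dihedral group of order 12, and $(\cdot/p)$ the Legendre symbol. *)

From HB Require Import structures.
From mathcomp Require Import all_boot all_order all_algebra all_fingroup all_solvable all_field.
Set Implicit Arguments. Unset Strict Implicit. Unset Printing Implicit Defensive.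
Import GRing.Theory.
Local Open Scope ring_scope.

Definition legendre (p a : nat) : int :=
  if (p %| a)%N then 0%R
  else if [exists y : 'F_p, (y ^+ 2 == a%:R)%R] then 1%R else (-1)%R.

Definition sq_det (p : nat) (g : {'GL_2['F_p]}) : Prop :=
  exists y : 'F_p, \det (GLval g) = (y ^+ 2)%R.

Definition induces_inner (gT : finGroupType) (H : {group gT}) (x : gT) : Prop :=
  exists2 h, h \in H & {in H, forall y, (y ^ x = y ^ h)%g}.

(** Write H = <a, b> with a^3 = b^4 = 1 and a^b = a^-1.  An automorphism of H
    sends a to a^(+-1) and b to an element of order 4, i.e. to (a^i b)^(+-1).
    In GL_2(F) the matrix A of a is not scalar, so anything commuting with A is a
    polynomial u + v A; since B does not commute with A, the centraliser of H
    consists of scalars.  Hence B^2 = -1, A^2 + A + 1 = 0 and det A = det B = 1.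
    The matrix X = 1 + 2A (with X^2 = -3) commutes with A and anticommutes with B,
    so conjugation by X fixes a and inverts b; together with conjugation by
    elements of H it realises every automorphism.  Thus N(H) -> Aut(H) is onto
    with kernel the scalars, and Aut(H) is generated by rho = conj(a X) of order 6
    and the involution sigma = conj(b) inverting it: Aut(H) ~ D_12.  Finally every
    x in N(H) is c * h * X^m with c scalar and det h = 1, so det x = c^2 3^m,
    which is always a square when 3 is, and otherwise exactly when m = 0, i.e.
    when x induces an inner automorphism. *)

From HB Require Import structures.
From mathcomp Require Import all_boot all_order all_algebra all_fingroup all_solvable all_field.
From mathcomp Require Import ring zify.
Import GRing.Theory.
Local Open Scope group_scope.

Set Implicit Arguments. Unset Strict Implicit. Unset Printing Implicit Defensive.

(** * Two-by-two matrices *)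

Section Matrix2.
Local Open Scope ring_scope.
Variable F : fieldType.
Implicit Types (M N : 'M[F]_2) (u v : F).

Lemma mx2_eq M N :
  M 0 0 = N 0 0 -> M 0 1 = N 0 1 -> M 1 0 = N 1 0 -> M 1 1 = N 1 1 -> M = N.
Proof.
move=> e00 e01 e10 e11; apply/matrixP=> i j.
have ord2 (k : 'I_2) : k = 0 \/ k = 1.
  by case: k => [[|[|//]] ?]; [left|right]; apply: val_inj.
by case: (ord2 i) (ord2 j) => -> [] ->.
Qed.

Let ord0_0 : ord0 = 0 :> 'I_2. Proof. exact: val_inj. Qed.
Let lift0_1 : lift ord0 ord0 = 1 :> 'I_2. Proof. exact: val_inj. Qed.
Let lift1_0 : lift 1 0 = 0 :> 'I_2. Proof. exact: val_inj. Qed.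

Lemma mulmx2E M N i j : (M * N) i j = M i 0 * N 0 j + M i 1 * N 1 j.
Proof. by rewrite mxE !big_ord_recl big_ord0 addr0 lift0_1 ord0_0. Qed.

Lemma det_mx2 M : \det M = M 0 0 * M 1 1 - M 0 1 * M 1 0.
Proof.
rewrite (expand_det_row M 0) !big_ord_recl big_ord0 addr0 /cofactor !det_mx11 !mxE.
by rewrite lift0_1 ord0_0 lift1_0 /= expr0 expr1 mul1r mulN1r mulrN.
Qed.

Lemma mxtrace2 M : \tr M = M 0 0 + M 1 1.
Proof. by rewrite /mxtrace !big_ord_recl big_ord0 addr0 lift0_1 ord0_0. Qed.

Lemma scalar_mx_commute u N : u%:M * N = N * u%:M.
Proof. exact/esym/comm_mx_scalar. Qed.

Lemma mx2_Cayley_Hamilton M : M ^+ 2 = \tr M *: M - (\det M)%:M.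
Proof. by apply: mx2_eq; rewrite expr2 !mulmx2E !mxE /= det_mx2 mxtrace2; ring. Qed.

Lemma mx2_cube M : M ^+ 3 = (\tr M ^+ 2 - \det M) *: M - (\tr M * \det M)%:M.
Proof.
by apply: mx2_eq; rewrite !exprS expr0 mulr1 !mulmx2E !mxE /= det_mx2 mxtrace2; ring.
Qed.

Lemma det_mx2_affine u v M :
  \det (u%:M + v *: M) = u ^+ 2 + u * v * \tr M + v ^+ 2 * \det M.
Proof. by rewrite !det_mx2 mxtrace2 !mxE /=; ring. Qed.

Lemma scalemx_eq_scalar M u v : ~~ is_scalar_mx M -> u *: M = v%:M -> u = 0 /\ v = 0.
Proof.
move=> nsM eM; have [u0|u_neq0] := eqVneq u 0.
  by split=> //; move/(congr1 (fun N => N 0 0)): eM; rewrite u0 scale0r !mxE.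
case/negP: nsM; apply/is_scalar_mxP; exists (v / u); apply: (scalerI u_neq0).
by rewrite eM; apply: mx2_eq; rewrite !mxE /=; field.
Qed.

Lemma mx2_coef_eq M u v u' v' : ~~ is_scalar_mx M ->
  u *: M + v%:M = u' *: M + v'%:M -> u = u' /\ v = v'.
Proof.
move=> nsM e; have : (u - u') *: M = (v' - v)%:M.
  rewrite scalerBl raddfB /=; apply/eqP; rewrite subr_eq addrAC eq_sym subr_eq addrC e.
  by rewrite addrC.
by case/(scalemx_eq_scalar nsM) => /eqP + /eqP; rewrite !subr_eq0 => /eqP -> /eqP ->.
Qed.

Lemma mx2_quadratic M u v : ~~ is_scalar_mx M ->
  M ^+ 2 = u *: M + v%:M -> \tr M = u /\ \det M = - v.
Proof.
rewrite mx2_Cayley_Hamilton -raddfN /= => nsM /(mx2_coef_eq nsM) [-> <-].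
by rewrite opprK.
Qed.

Lemma proportional3 (x1 x2 x3 y1 y2 y3 : F) : [|| x1 != 0, x2 != 0 | x3 != 0] ->
    x1 * y2 = y1 * x2 -> x1 * y3 = y1 * x3 -> x2 * y3 = y2 * x3 ->
  exists v, [/\ y1 = v * x1, y2 = v * x2 & y3 = v * x3].
Proof.
have [x1_0|nz1 _ e12 e13 _] := eqVneq x1 0; last first.
  exists (y1 / x1); split; first by field.
    by apply: (mulfI nz1); rewrite e12; field.
  by apply: (mulfI nz1); rewrite e13; field.
rewrite x1_0 !mul0r /=; have [x2_0 nz3|nz2 _ e12 _ e23] := eqVneq x2 0; last first.
  exists (y2 / x2); split; last by apply: (mulfI nz2); rewrite e23; field.
    by apply: (mulIf nz2); rewrite -e12; ring.
  by field.
rewrite x2_0 => _ e13 e23; exists (y3 / x3); split; last by field.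
  by apply: (mulIf nz3); rewrite -e13; ring.
by apply: (mulIf nz3); rewrite -e23; ring.
Qed.

Lemma mx2_centralizer M N : ~~ is_scalar_mx M -> M * N = N * M ->
  exists u v, N = u%:M + v *: M.
Proof.
move=> nsM cMN; have e i j : (M * N) i j = (N * M) i j by rewrite cMN.
have nzM : [|| M 0 1 != 0, M 1 0 != 0 | M 1 1 - M 0 0 != 0].
  apply: contraR nsM; rewrite !negb_or !negbK subr_eq0.
  case/and3P=> /eqP m01 /eqP m10 /eqP m11.
  by apply/is_scalar_mxP; exists (M 0 0); apply: mx2_eq; rewrite !mxE /= ?m01 ?m10 ?m11.
have [v [n01 n10 n11]] : exists v, [/\ N 0 1 = v * M 0 1, N 1 0 = v * M 1 0
                                     & N 1 1 - N 0 0 = v * (M 1 1 - M 0 0)].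
  apply: proportional3 nzM _ _ _; apply/eqP.
  - by rewrite -subr_eq0 -(subrr ((M * N) 0 0)) {2}e !mulmx2E; apply/eqP; ring.
  - by rewrite -subr_eq0 -(subrr ((M * N) 0 1)) {2}e !mulmx2E; apply/eqP; ring.
  - by rewrite eq_sym -subr_eq0 -(subrr ((M * N) 1 0)) {2}e !mulmx2E; apply/eqP; ring.
exists (N 0 0 - v * M 0 0), v; apply: mx2_eq; rewrite !mxE /= -?n01 -?n10; try ring.
by rewrite -[N 1 1](subrK (N 0 0)) n11; ring.
Qed.

Section DicyclicMatrices.
Variables A B : 'M[F]_2.
Hypotheses (A3 : A ^+ 3 = 1) (B4 : B ^+ 4 = 1) (AB : A * B = B * A ^+ 2)
  (B2_neq1 : B ^+ 2 != 1) (AB_neqBA : A * B != B * A).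

Lemma nonscalar_Dic_A : ~~ is_scalar_mx A.
Proof. by apply: contra AB_neqBA => /is_scalar_mxP[u ->]; rewrite scalar_mx_commute. Qed.

Lemma nonscalar_Dic_B : ~~ is_scalar_mx B.
Proof. by apply: contra AB_neqBA => /is_scalar_mxP[u ->]; rewrite scalar_mx_commute. Qed.

Lemma Dic_cent_scalar N : N * A = A * N -> N * B = B * N -> is_scalar_mx N.
Proof.
move=> cNA cNB; have [u [v eN]] := mx2_centralizer nonscalar_Dic_A (esym cNA).
have [v0|v_neq0] := eqVneq v 0.
  by apply/is_scalar_mxP; exists u; rewrite eN v0 scale0r addr0.
case/negP: AB_neqBA; apply/eqP/(scalerI v_neq0).
move: cNB; rewrite eN mulrDl mulrDr scalar_mx_commute => /addrI.
by rewrite -scalerAl -scalerAr.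
Qed.

Lemma Dic_A2B : A ^+ 2 * B = B * A.
Proof.
rewrite expr2 -mulrA AB mulrA AB -mulrA -exprD.
by rewrite -[(2 + 2)%N]/(3 + 1)%N exprD A3 mul1r expr1.
Qed.

Lemma Dic_sqrB : B ^+ 2 = -1.
Proof.
have [s eB2] : exists s, B ^+ 2 = s%:M.
  apply/is_scalar_mxP/Dic_cent_scalar; last by rewrite -exprSr -exprS.
  by apply: esym; rewrite expr2 mulrA AB -mulrA Dic_A2B mulrA.
have s2 : s ^+ 2 = 1.
  have := congr1 (fun M => M 0 0) B4; rewrite -[4%N]/(2 * 2)%N exprM eB2 expr2 mulmx2E.
  by rewrite !mxE /= mulr0n mulr0 addr0 mulr1n expr2.
have : s != 1 by apply: contra B2_neq1; rewrite eB2 => /eqP ->.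
move/eqP: s2; rewrite sqrf_eq1 => /orP[/eqP -> /eqP //| /eqP s_1 _].
by rewrite eB2 s_1 raddfN.
Qed.

Lemma Dic_detB : \det B = 1.
Proof.
have eB2 : B ^+ 2 = 0 *: B + (-1)%:M by rewrite Dic_sqrB scale0r add0r raddfN.
by have [_ ->] := mx2_quadratic nonscalar_Dic_B eB2; rewrite opprK.
Qed.

Lemma Dic_trdetA : \tr A = -1 /\ \det A = 1.
Proof.
have [t2d td] : \tr A ^+ 2 - \det A = 0 /\ - (\tr A * \det A) = 1.
  apply: (mx2_coef_eq nonscalar_Dic_A); rewrite scale0r add0r raddfN /= -mx2_cube.
  by rewrite A3.
have d_neq0 : \det A != 0.
  by apply/eqP => d0; move: td; rewrite d0 mulr0 oppr0 => /esym/eqP; rewrite oner_eq0.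
have d1 : \det A = 1.
  have := congr1 determinant AB; rewrite !detM mulrC Dic_detB !mul1r.
  by rewrite -[X in X = _]mulr1 => /(mulfI d_neq0)/esym.
by split=> //; move: td; rewrite d1 mulr1 => /(canRL (@opprK _)).
Qed.

Lemma Dic_sqrA : A ^+ 2 = - A - 1.
Proof.
have [trA detA] := Dic_trdetA.
by rewrite mx2_Cayley_Hamilton trA detA scaleN1r.
Qed.

Definition twist_mx := 1 + A *+ 2.

Lemma twist_mxA : twist_mx * A = A * twist_mx.
Proof. by rewrite mulrDl mulrDr mul1r mulr1 mulrnAl mulrnAr. Qed.

Lemma twist_mxB : twist_mx * B = - (B * twist_mx).
Proof.
apply/eqP; rewrite -addr_eq0 mulrDl mulrDr mul1r mulr1 mulrnAl mulrnAr AB Dic_sqrA.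
by apply/eqP/mx2_eq; rewrite !(mulmx2E, mxE) /=; ring.
Qed.

Lemma det_twist_mx : \det twist_mx = 3%:R.
Proof.
have [trA detA] := Dic_trdetA.
by rewrite /twist_mx -scaler_nat (det_mx2_affine 1 2%:R A) trA detA; ring.
Qed.

End DicyclicMatrices.
End Matrix2.

(** * The dicyclic group of order 12 and its automorphisms *)

Lemma conjg_fix (gT : finGroupType) (x y : gT) : commute x y -> x ^ y = x.
Proof. by move/commgP/conjg_fixP. Qed.

Definition Dic12_gens (gT : finGroupType) (H : {group gT}) (a b : gT) :=
  [/\ <[a]> <*> <[b]> = H, #|H| = 12, a ^+ 3 = 1, b ^+ 4 = 1 & a ^ b = a^-1].

Lemma Dic12_gens_isog (gT : finGroupType) (H : {group gT}) :
    H \isog Grp (a : b : (a ^+ 3, b ^+ 4, a ^ b = a^-1)) ->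
  exists a b, Dic12_gens H a b.
Proof.
move=> isoH; have isoE := @Grp_ext_dihedral 3 isT 4 isT isT.
have cardH : #|H| = 12.
  rewrite -[12%N]/(4./2 * 3.*2)%N -(@card_ext_dihedral 3 isT 4 isT isT); apply/card_isog.
  by rewrite isogEhom isoE (isoGrp_hom isoH) isoH (isoGrp_hom isoE).
have := isoGrp_hom isoH; case/existsP => -[a b] /=; rewrite !xpair_eqE.
by case/and4P => /eqP ? /eqP ? /eqP ? /eqP ?; exists a, b.
Qed.

Section Dic12Group.
Variables (gT : finGroupType) (H : {group gT}) (a b : gT).
Hypothesis genH : Dic12_gens H a b.

Let defH : <[a]> <*> <[b]> = H. Proof. by case: genH. Qed.
Let cardH : #|H| = 12. Proof. by case: genH. Qed.
Let a3 : a ^+ 3 = 1. Proof. by case: genH. Qed.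
Let b4 : b ^+ 4 = 1. Proof. by case: genH. Qed.
Let ab : a ^ b = a^-1. Proof. by case: genH. Qed.

Lemma Dic_a_in : a \in H.
Proof. by rewrite -defH (subsetP (joing_subl _ _)) ?cycle_id. Qed.

Lemma Dic_b_in : b \in H.
Proof. by rewrite -defH (subsetP (joing_subr _ _)) ?cycle_id. Qed.

Lemma Dic_mulg_cycles : <[a]> * <[b]> = H.
Proof. by rewrite -defH norm_joinEr // norms_cycle ab groupV cycle_id. Qed.

Lemma Dic_orders : #[a] = 3 /\ #[b] = 4.
Proof.
have := mul_cardG <[a]> <[b]>; rewrite Dic_mulg_cycles cardH -!orderE.
have oa : (#[a] <= 3)%N by apply: dvdn_leq => //; rewrite order_dvdn a3.
have ob : (#[b] <= 4)%N by apply: dvdn_leq => //; rewrite order_dvdn b4.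
have := leq_mul oa ob; have := cardG_gt0 (<[a]> :&: <[b]>).
set c := #|_|; move=> c_gt0 le12 e; have ab12 : (#[a] * #[b] = 12)%N by lia.
by split; nia.
Qed.

Lemma Dic_a_neq1 : a != 1.
Proof. by rewrite -order_eq1 (proj1 Dic_orders). Qed.

Lemma Dic_a2_neq1 : a ^+ 2 != 1.
Proof. by rewrite -order_dvdn (proj1 Dic_orders). Qed.

Lemma Dic_b2_neq1 : b ^+ 2 != 1.
Proof. by rewrite -order_dvdn (proj2 Dic_orders). Qed.

Lemma Dic_invg_a : a^-1 = a ^+ 2.
Proof. by apply/eqP; rewrite eq_invg_mul -expgS a3. Qed.

Lemma Dic_invg_b : b^-1 = b ^+ 3.
Proof. by apply/eqP; rewrite eq_invg_mul -expgS b4. Qed.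

Lemma Dic_invg_a_neq : a^-1 != a.
Proof. by rewrite eq_invg_mul -expg2 Dic_a2_neq1. Qed.

Lemma Dic_mul_ab : a * b = b * a ^+ 2.
Proof. by rewrite -Dic_invg_a -ab conjgE mulKVg. Qed.

Lemma Dic_mul_b_aX i : b * a ^+ i = a ^- i * b.
Proof.
have abV : a ^ b^-1 = a^-1 by rewrite -[a in LHS]invgK -ab conjVg conjgK.
by rewrite conjgCV conjXg abV expgVn.
Qed.

Lemma Dic_not_commute : ~ commute a b.
Proof. by move/conjg_fix; rewrite ab => /eqP; apply/negP/Dic_invg_a_neq. Qed.

Lemma Dic_commute_a_b2 : commute a (b ^+ 2).
Proof. by apply/commgP/conjg_fixP; rewrite expg2 conjgM ab conjVg ab invgK. Qed.

Lemma Dic_commute_aX_b2 i : commute (a ^+ i) (b ^+ 2).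
Proof. exact/commute_sym/commuteX/commute_sym/Dic_commute_a_b2. Qed.

Lemma Dic_expg2_aXb i : (a ^+ i * b) ^+ 2 = b ^+ 2.
Proof. by rewrite expg2 -mulgA (mulgA b) Dic_mul_b_aX -mulgA mulKVg expg2. Qed.

Lemma Dic_invg_aXb i : (a ^+ i * b)^-1 = a ^+ i * b^-1.
Proof. by rewrite invMg conjgCV invgK conjVg conjXg ab expgVn invgK. Qed.

Lemma Dic_expg3_aXb_neq1 i : (a ^+ i * b) ^+ 3 != 1.
Proof.
apply/eqP => x3; have x1 : a ^+ i * b = 1.
  by rewrite -[LHS]mul1g -x3 -expgSr (expgM _ 2 2) Dic_expg2_aXb -expgM b4.
by move: Dic_b2_neq1; rewrite -(Dic_expg2_aXb i) x1 expg1n eqxx.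
Qed.

Lemma Dic_conjg_b_aX l : b ^ (a ^+ l) = a ^+ l * b.
Proof.
have x3 : (a ^+ l) ^+ 3 = 1 by rewrite expgAC a3 expg1n.
rewrite conjgE Dic_mul_b_aX mulgA; congr (_ * b).
by apply/eqP; rewrite -invMg eq_invg_mul -expg2 -expgSr x3.
Qed.

Lemma mem_Dic h : h \in H -> exists i j, (j < 4)%N /\ h = a ^+ i * b ^+ j.
Proof.
rewrite -Dic_mulg_cycles => /mulsgP[x y /cycleP[i ->] /cycleP[j ->] ->].
exists i, (j %% 4)%N; rewrite ltn_mod -{2}(proj2 Dic_orders) expg_mod_order.
by [].
Qed.

Lemma Dic_order3 h : h \in H -> h ^+ 3 = 1 -> h != 1 -> h = a \/ h = a^-1.
Proof.
case/mem_Dic=> i [j [lt4 ->]] h3 hn1.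
case: j lt4 h3 hn1 => [|[|[|[|//]]]] _ h3 hn1.
- move: h3 hn1; rewrite expg0 mulg1 -(expg_mod_order a i) (proj1 Dic_orders).
  have : (i %% 3 < 3)%N by rewrite ltn_mod.
  case: (i %% 3)%N => [|[|[|//]]] _ _; rewrite ?expg0 ?eqxx ?expg1 //; first by left.
  by right; rewrite Dic_invg_a.
- by rewrite expg1 in h3; move: (Dic_expg3_aXb_neq1 i); rewrite h3 eqxx.
- exfalso; move: h3; rewrite (expgMn _ (Dic_commute_aX_b2 i)) expgAC a3 expg1n mul1g.
  by rewrite -expgM -[(2*3)%N]/(4 + 2)%N expgD b4 mul1g; apply/eqP; exact: Dic_b2_neq1.
- move: h3; rewrite -Dic_invg_b -Dic_invg_aXb expgVn => /eqP.
  by rewrite invg_eq1 (negbTE (Dic_expg3_aXb_neq1 i)).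
Qed.

Lemma Dic_order4 h : h \in H -> h ^+ 4 = 1 -> h ^+ 2 != 1 ->
  exists i, h = a ^+ i * b \/ h = (a ^+ i * b)^-1.
Proof.
have ai3 i : (a ^+ i) ^+ 3 = 1 by rewrite expgAC a3 expg1n.
case/mem_Dic=> i [j [lt4 ->]] h4 h2.
case: j lt4 h4 h2 => [|[|[|[|//]]]] _ h4 h2.
- move: h4 h2; rewrite expg0 mulg1 expgSr ai3 mul1g => ->.
  by rewrite expg1n eqxx.
- by exists i; left; rewrite expg1.
- exfalso; move: h4; rewrite (expgMn _ (Dic_commute_aX_b2 i)) expgSr ai3 mul1g -expgM.
  rewrite -[(2*4)%N]/(4 + 4)%N expgD b4 !mulg1 => ai1; move: h2.
  by rewrite ai1 mul1g -expgM b4 eqxx.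
- by exists i; right; rewrite Dic_invg_aXb Dic_invg_b.
Qed.

Lemma Aut_Dic_images f : f \in Aut H ->
  (f a = a \/ f a = a^-1) /\ exists i, f b = a ^+ i * b \/ f b = (a ^+ i * b)^-1.
Proof.
move=> Af; have injf := injm_autm Af.
have fX x n : x \in H -> f (x ^+ n) = f x ^+ n by move=> Hx; rewrite -(autmE Af) morphX.
have f1 : f 1 = 1 by rewrite -(autmE Af) morph1.
split.
  apply: Dic_order3; first exact: Aut_closed Dic_a_in.
    by rewrite -fX ?Dic_a_in // a3 f1.
  by rewrite -(autmE Af) morph_injm_eq1 ?Dic_a_in // Dic_a_neq1.
apply: Dic_order4; first exact: Aut_closed Dic_b_in.
  by rewrite -fX ?Dic_b_in // b4 f1.
by rewrite -fX ?Dic_b_in // -(autmE Af) morph_injm_eq1 ?groupX ?Dic_b_in // Dic_b2_neq1.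
Qed.

Lemma conj_aut_Dic_eq n f : n \in 'N(H) -> f \in Aut H ->
  a ^ n = f a -> b ^ n = f b -> conj_aut H n = f.
Proof.
move=> nN Af ea eb; apply: (eq_Aut (Aut_aut _ _) Af) => h.
case/mem_Dic=> i [j [_ ->]]; have Ha := Dic_a_in; have Hb := Dic_b_in.
rewrite norm_conj_autE ?groupM ?groupX // conjMg !conjXg ea eb -(autmE Af).
by rewrite morphM ?groupX // !morphX.
Qed.

Lemma conj_aut_Dic_eq1 n : n \in 'N(H) -> a ^ n = a -> b ^ n = b -> conj_aut H n = 1.
Proof. by move=> nN ea eb; apply: conj_aut_Dic_eq; rewrite ?group1 ?perm1. Qed.

Lemma Dic_a_norm : a \in 'N(H). Proof. exact: (subsetP (normG H)) Dic_a_in. Qed.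
Lemma Dic_b_norm : b \in 'N(H). Proof. exact: (subsetP (normG H)) Dic_b_in. Qed.

Section Twist.
Variable X : gT.
Hypotheses (aX : a ^ X = a) (bX : b ^ X = b^-1).

Lemma Dic_twist_norm : X \in 'N(H).
Proof. by apply/normP; rewrite -defH conjYg -!cycleJ aX bX cycleV. Qed.

Definition conj_rep (k m : bool) l := (if k then b else 1) * (if m then X else 1) * a ^+ l.

Lemma conj_rep_norm k m l : conj_rep k m l \in 'N(H).
Proof.
have Nb : (if k then b else 1) \in 'N(H) by case: k; rewrite ?group1 ?Dic_b_norm.
have NX : (if m then X else 1) \in 'N(H) by case: m; rewrite ?group1 ?Dic_twist_norm.
by rewrite !groupM ?groupX ?Dic_a_norm.
Qed.

Lemma conj_rep_in k l : conj_rep k false l \in H.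
Proof.
rewrite /conj_rep mulg1 groupM ?groupX ?Dic_a_in //.
by case: k; rewrite ?group1 ?Dic_b_in.
Qed.

Lemma conjg_a_conj_rep k m l : a ^ conj_rep k m l = if k then a^-1 else a.
Proof.
have aal : a ^ (a ^+ l) = a by apply/conjg_fix/commuteX.
by rewrite !conjgM; case: k; case: m; rewrite ?conjg1 ?ab ?conjVg ?aX ?aal.
Qed.

Lemma conjg_b_conj_rep k m l :
  b ^ conj_rep k m l = if m then (a ^+ l * b)^-1 else a ^+ l * b.
Proof.
have bbk : b ^ (if k then b else 1) = b by case: k; rewrite ?conjg1 ?conjg_fix.
by rewrite !conjgM bbk; case: m; rewrite ?conjg1 ?bX ?conjVg Dic_conjg_b_aX.
Qed.

Lemma Aut_Dic_conj_rep f : f \in Aut H -> exists k m l, conj_aut H (conj_rep k m l) = f.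
Proof.
move=> Af; have [[fa|fa] [i [fb|fb]]] := Aut_Dic_images Af;
  [exists false, false, i | exists false, true, i
  | exists true, false, i | exists true, true, i];
  by apply: conj_aut_Dic_eq; rewrite ?conj_rep_norm ?conjg_a_conj_rep ?conjg_b_conj_rep.
Qed.

Lemma normalizer_Dic_decomp x : x \in 'N(H) ->
  exists k m l, x * (conj_rep k m l)^-1 \in 'C(H).
Proof.
move=> Nx; have [k [m [l e]]] := Aut_Dic_conj_rep (Aut_aut _ _ : conj_aut H x \in Aut H).
have Nr := conj_rep_norm k m l.
exists k, m, l; rewrite -ker_conj_aut; apply/kerP; first by rewrite groupM ?groupV.
by rewrite morphM ?groupV // morphV //= e mulgV.
Qed.

Local Notation alpha := (conj_aut H a).
Local Notation sigma := (conj_aut H b).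
Local Notation xi := (conj_aut H X).
Local Notation rho := (alpha * xi).

Let NX := Dic_twist_norm.
Let Na := Dic_a_norm.
Let Nb := Dic_b_norm.

Let alpha3 : alpha ^+ 3 = 1.
Proof. by rewrite -morphX //= a3 morph1. Qed.

Let xi2 : xi ^+ 2 = 1.
Proof.
rewrite -morphX //=; apply: conj_aut_Dic_eq1; rewrite ?groupX // expg2 conjgM.
  by rewrite !aX.
by rewrite bX conjVg bX invgK.
Qed.

Let sigma2 : sigma ^+ 2 = 1.
Proof.
rewrite -morphX //=; apply: conj_aut_Dic_eq1; rewrite ?groupX //.
  exact/conjg_fix/Dic_commute_a_b2.
exact/conjg_fix/commuteX.
Qed.

Let commute_alpha_xi : commute alpha xi.
Proof. by rewrite /commute -!morphM //; congr conj_aut; apply/commgP/conjg_fixP. Qed.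

Let commute_xi_sigma : commute xi sigma.
Proof.
rewrite /commute -!morphM //=; apply: conj_aut_Dic_eq; rewrite ?groupM ?Aut_aut //.
  by rewrite norm_conj_autE ?Dic_a_in ?groupM // !conjgM aX ab conjVg aX.
by rewrite norm_conj_autE ?Dic_b_in ?groupM // !conjgM bX conjVg conjg_fix // bX.
Qed.

Let alpha_sigma : alpha ^ sigma = alpha^-1.
Proof. by rewrite -morphJ //= ab morphV. Qed.

Let rho_expE n : rho ^+ n = alpha ^+ n * xi ^+ n.
Proof. exact: expgMn commute_alpha_xi. Qed.

Let rho6 : rho ^+ 6 = 1.
Proof. by rewrite rho_expE (expgM alpha 3 2) alpha3 (expgM xi 2 3) xi2 !expg1n mulg1. Qed.

Let rho3 : rho ^+ 3 = xi.
Proof. by rewrite rho_expE alpha3 mul1g expgS xi2 mulg1. Qed.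

Let rho4 : rho ^+ 4 = alpha.
Proof. by rewrite rho_expE expgS alpha3 mulg1 (expgM xi 2 2) xi2 expg1n mulg1. Qed.

Let rho_sigma : rho ^ sigma = rho^-1.
Proof.
have xiV : xi^-1 = xi by apply/eqP; rewrite eq_invg_mul -expg2 xi2.
rewrite conjMg alpha_sigma (conjg_fix commute_xi_sigma) invMg xiV.
exact/commute_sym/commuteV/commute_sym.
Qed.

Let Aut_rho : rho \in Aut H. Proof. by rewrite groupM ?Aut_aut. Qed.
Let Aut_sigma : sigma \in Aut H. Proof. exact: Aut_aut. Qed.

Let Aut_Dic_gen : Aut H = <[rho]> <*> <[sigma]>.
Proof.
apply/eqP; rewrite eqEsubset join_subG !cycle_subG Aut_rho Aut_sigma !andbT.
have rJ : rho \in <[rho]> <*> <[sigma]> := subsetP (joing_subl _ _) _ (cycle_id _).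
have sJ : sigma \in <[rho]> <*> <[sigma]> := subsetP (joing_subr _ _) _ (cycle_id _).
apply/subsetP => f /Aut_Dic_conj_rep[k [m [l <-]]].
have Nk : (if k then b else 1) \in 'N(H) by case: k; rewrite ?group1.
have Nm : (if m then X else 1) \in 'N(H) by case: m; rewrite ?group1.
rewrite /conj_rep !morphM ?groupM ?groupX //=.
- by case: (k); rewrite ?morph1 ?group1.
- by case: (m); rewrite ?morph1 ?group1 // -[y in y \in _]rho3 groupX.
- by rewrite morphX //= -[y in y ^+ _ \in _]rho4 !groupX.
Qed.

Let sigma_notin_rho : sigma \notin <[rho]>.
Proof.
have rho_a : rho a = a.
  by rewrite permM (norm_conj_autE Na Dic_a_in) conjg_fix // (norm_conj_autE NX Dic_a_in).
apply/negP => /cycleP[k ek].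
have : sigma a = a by rewrite ek permX_fix.
by rewrite norm_conj_autE ?Dic_a_in // ab => /eqP; apply/negP/Dic_invg_a_neq.
Qed.

Let order_rho : #[rho] = 6.
Proof.
have d6 : (#[rho] %| 6)%N by rewrite order_dvdn rho6.
have n2 : ~~ (#[rho] %| 2)%N.
  rewrite order_dvdn rho_expE xi2 mulg1 -morphX //=; apply/eqP => e.
  have : conj_aut H (a ^+ 2) b = b by rewrite e perm1.
  rewrite norm_conj_autE ?Dic_b_in ?groupX // Dic_conjg_b_aX => /(canRL (mulgK b)).
  by rewrite mulgV => e2; move: Dic_a2_neq1; rewrite e2 eqxx.
have n3 : ~~ (#[rho] %| 3)%N.
  rewrite order_dvdn rho3; apply/eqP => e.
  have : xi b = b by rewrite e perm1.
  rewrite norm_conj_autE ?Dic_b_in // bX => e2; move: Dic_b2_neq1.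
  by rewrite expg2 -{1}e2 mulVg eqxx.
have := @dvdn_leq _ 6 isT d6; move: d6 n2 n3.
by case: #[rho] => [|[|[|[|[|[|[|]]]]]]].
Qed.

Lemma Aut_Dic_isog_D12 : Aut H \isog 'D_12.
Proof.
have isoD := @Grp_dihedral 6 isT.
have homD : Aut H \homg Grp (x : y : x ^+ 6, y ^+ 2, x ^ y = x^-1).
  apply/existsP; exists (rho, sigma).
  by rewrite /= !xpair_eqE -Aut_Dic_gen rho6 sigma2 rho_sigma !eqxx.
apply/(isoGrpP _ isoD); split=> //; rewrite (@card_dihedral 6 isT).
have dvd12 : (#|Aut H| %| 12)%N.
  by move: homD; rewrite -(isoD _ (Aut H)%G) => /card_homg; rewrite (@card_dihedral 6 isT).
have dvd6 : (6 %| #|Aut H|)%N by rewrite -order_rho orderE cardSg // cycle_subG.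
have gt6 : (6 < #|Aut H|)%N.
  rewrite -order_rho orderE; apply: proper_card; apply/properP.
  split; first by rewrite cycle_subG.
  by exists sigma; [exact: Aut_sigma | exact: sigma_notin_rho].
have := @dvdn_leq _ 12 isT dvd12; move: dvd12 dvd6 gt6.
by case: #|Aut H| => [|[|[|[|[|[|[|[|[|[|[|[|[|]]]]]]]]]]]]].
Qed.

End Twist.
End Dic12Group.

(** * Dicyclic subgroups of GL_2 *)

Lemma GL_XE n (R : finComUnitRingType) (u : {'GL_n[R]}) k :
  GLval (u ^+ k) = (GLval u ^+ k)%R.
Proof. by elim: k => [|k IH]; rewrite ?expg0 ?expr0 // expgS exprS GL_ME IH. Qed.

Lemma detX n (R : comPzRingType) (M : 'M[R]_n.+1) k : (\det (M ^+ k) = \det M ^+ k)%R.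
Proof. by elim: k => [|k IH]; rewrite ?expr0 ?det1 // !exprS detM IH. Qed.

Lemma GL_commute n (R : finComUnitRingType) (x y : {'GL_n[R]}) :
  commute x y <-> (GLval x * GLval y = GLval y * GLval x)%R.
Proof. by rewrite -!GL_ME; split=> [-> // | /val_inj]. Qed.

Lemma GL_scalar_center n (R : finComUnitRingType) (x : {'GL_n[R]}) :
  is_scalar_mx (GLval x) -> x \in 'Z('GL_n[R]).
Proof.
case/is_scalar_mxP=> c ex; rewrite inE in_setT; apply/centP=> y _.
by apply: val_inj; change (GLval (x * y) = GLval (y * x)); rewrite !GL_MxE ex scalar_mxC.
Qed.

Lemma induces_innerP (gT : finGroupType) (H : {group gT}) x :
  induces_inner H x <-> exists2 h, h \in H & x * h^-1 \in 'C(H).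
Proof.
split=> -[h Hh xh]; exists h => //.
  by apply/centP=> y Hy; apply/esym/commgP/conjg_fixP; rewrite conjgM xh // conjgK.
move=> y Hy; have cy : commute y (x * h^-1) by apply: esym; apply: (centP xh).
by rewrite -(mulgKV h x) conjgM (conjg_fix cy).
Qed.

Section DicyclicGL.
Variables (F : finFieldType) (H : {group {'GL_2[F]}}) (a b : {'GL_2[F]}).
Hypothesis genH : Dic12_gens H a b.

Local Notation A := (GLval a).
Local Notation B := (GLval b).

Let A3 : (A ^+ 3 = 1)%R. Proof. by case: genH => _ _ a3 _ _; rewrite -GL_XE a3. Qed.
Let B4 : (B ^+ 4 = 1)%R. Proof. by case: genH => _ _ _ b4 _; rewrite -GL_XE b4. Qed.
Let AB : (A * B = B * A ^+ 2)%R.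
Proof. by rewrite -GL_XE -!GL_ME (Dic_mul_ab genH). Qed.
Let B2_neq1 : (B ^+ 2 != 1)%R.
Proof.
by rewrite -GL_XE; apply: contra (Dic_b2_neq1 genH) => /eqP e; apply/eqP/val_inj.
Qed.
Let AB_neqBA : (A * B != B * A)%R.
Proof. by apply/eqP=> /GL_commute; apply: Dic_not_commute genH. Qed.

Lemma cent_Dic_scalar x : x \in 'C(H) -> is_scalar_mx (GLval x).
Proof.
move=> cHx; apply: (Dic_cent_scalar AB_neqBA); apply/(GL_commute x _); apply: (centP cHx).
  exact: Dic_a_in genH.
exact: Dic_b_in genH.
Qed.

Lemma cent_Dic_center : 'C(H) = 'Z('GL_2[F]).
Proof.
apply/eqP; rewrite eqEsubset; apply/andP; split; apply/subsetP=> x.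
  by move/cent_Dic_scalar/GL_scalar_center.
by rewrite inE => /andP[_]; apply: subsetP; apply: centS; apply: subsetT.
Qed.

Lemma ker_conj_aut_Dic : 'ker_('N(H)) (conj_aut H) = 'Z('GL_2[F]).
Proof. by rewrite ker_conj_aut -cent_Dic_center; apply/setIidPr/cent_sub. Qed.

Lemma det_cent_Dic x :
  x \in 'C(H) -> exists2 c : F, (c != 0)%R & (\det (GLval x) = c ^+ 2)%R.
Proof.
move/cent_Dic_scalar/is_scalar_mxP=> [c ex]; have := GL_det x.
by rewrite ex det_scalar expf_eq0 /= => c_neq0; exists c.
Qed.

Lemma det_cent_mul x r : x * r^-1 \in 'C(H) ->
  exists2 c : F, (c != 0)%R & (\det (GLval x) = c ^+ 2 * \det (GLval r))%R.
Proof.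
by case/det_cent_Dic=> c c_neq0 e; exists c; rewrite // -e -detM -GL_ME mulgKV.
Qed.

Lemma det_Dic h : h \in H -> (\det (GLval h) = 1)%R.
Proof.
case/(mem_Dic genH)=> i [j [_ ->]].
have [_ detA] := Dic_trdetA A3 B4 AB B2_neq1 AB_neqBA.
by rewrite GL_ME detM !GL_XE !detX detA (Dic_detB A3 B4 AB B2_neq1 AB_neqBA) !expr1n mulr1.
Qed.

Hypothesis three_neq0 : (3%:R != 0 :> F)%R.

Lemma twist_unit : (twist_mx A \is a GRing.unit)%R.
Proof. by rewrite unitmxE (det_twist_mx A3 B4 AB B2_neq1 AB_neqBA) unitfE. Qed.

Definition twist : {'GL_2[F]} := FinRing.unit _ twist_unit.

Lemma conjg_a_twist : a ^ twist = a.
Proof. by apply/conjg_fix/GL_commute; rewrite (twist_mxA A). Qed.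

Lemma conjg_b_twist : b ^ twist = b^-1.
Proof.
have BV : ((GLval b)^-1 = - GLval b)%R.
  apply: (mulrI (GL_unit b)); rewrite mulrV ?GL_unit // mulrN -expr2.
  by rewrite (Dic_sqrB A3 B4 AB B2_neq1 AB_neqBA) opprK.
have e : b * twist = twist * b^-1.
  apply: val_inj; change (GLval (b * twist) = GLval (twist * b^-1)).
  by rewrite !GL_ME GL_VE BV mulrN (twist_mxB A3 B4 AB B2_neq1 AB_neqBA) opprK.
by rewrite conjgE e mulKg.
Qed.

Lemma det_twist : (\det (GLval twist) = 3%:R)%R.
Proof. exact: (det_twist_mx A3 B4 AB B2_neq1 AB_neqBA). Qed.

Local Notation rep := (conj_rep a b twist).
Let decomp := normalizer_Dic_decomp genH conjg_a_twist conjg_b_twist.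

Lemma conj_aut_Dic_onto : conj_aut H @* 'N(H) = Aut H.
Proof.
apply/eqP; rewrite eqEsubset Aut_conj_aut; apply/subsetP=> f.
case/(Aut_Dic_conj_rep genH conjg_a_twist conjg_b_twist)=> [k [m [l <-]]].
by apply: mem_morphim; rewrite ?(conj_rep_norm genH conjg_a_twist conjg_b_twist).
Qed.

Lemma det_conj_rep k m l : (\det (GLval (rep k m l)) = if m then 3%:R else 1)%R.
Proof.
have Hb : (if k then b else 1) \in H by case: k; rewrite ?group1 ?(Dic_b_in genH).
have Hal : a ^+ l \in H by rewrite groupX ?(Dic_a_in genH).
rewrite /conj_rep !GL_ME !detM (det_Dic Hb) (det_Dic Hal) mul1r mulr1.
by case: m; rewrite ?det_twist ?GL_1E ?det1.
Qed.

Lemma sq_det_normalizer_Dic x : (exists y : F, y ^+ 2 = 3%:R)%R -> x \in 'N(H) ->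
  exists y : F, (\det (GLval x) = y ^+ 2)%R.
Proof.
move=> [y y2] /decomp[k [m [l /det_cent_mul[c _ ->]]]]; rewrite det_conj_rep.
by case: m; [exists (c * y)%R; rewrite exprMn y2 | exists c; rewrite mulr1].
Qed.

Lemma sq_det_normalizer_DicP x : (forall y : F, y ^+ 2 != 3%:R)%R -> x \in 'N(H) ->
  (exists y : F, \det (GLval x) = y ^+ 2)%R <-> induces_inner H x.
Proof.
move=> nsq3 Nx; split=> [[y ey] | /induces_innerP[h Hh /det_cent_mul[c _]]]; last first.
  by rewrite (det_Dic Hh) mulr1 => ->; exists c.
have [k [m [l cx]]] := decomp Nx; have [c c_neq0 ex] := det_cent_mul cx.
move: ex; rewrite det_conj_rep; case: m cx => cx ex.
  have := nsq3 (y / c)%R; rewrite expr_div_n -ey ex mulrAC divff ?mul1r ?eqxx //.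
  exact: expf_neq0.
by apply/induces_innerP; exists (rep k false l); rewrite ?(conj_rep_in genH).
Qed.

End DicyclicGL.

Lemma legendre_eq1_sq p a : legendre p a = 1%R -> exists y : 'F_p, (y ^+ 2 = a%:R)%R.
Proof.
rewrite /legendre; case: ifP => _; first by [].
by case: ifP => [/existsP[y /eqP ey] _|//]; exists y.
Qed.

Lemma legendre_eqN1_nsq p a : legendre p a = (-1)%R -> forall y : 'F_p, (y ^+ 2 != a%:R)%R.
Proof.
rewrite /legendre; case: ifP => _; first by [].
by case: ifP => // /existsPn nsq _ y; apply: nsq.
Qed.

Theorem lemma4p4 (p : nat) (pr_p : prime p) (p_ge5 : (5 <= p)%N)
    (H : {group {'GL_2['F_p]}})
    (isoH : H \isog Grp (a : b : (a ^+ 3, b ^+ 4, a ^ b = a^-1))) :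
  [/\ (* the conjugation morphism N_G(H) -> Aut(H) is onto, with kernel C(G),
         hence induces N_G(H)/C(G) ~ Aut(H) *)
      [/\ conj_aut H @* 'N_('GL_2(p))(H) = Aut H,
          'ker_('N_('GL_2(p))(H)) (conj_aut H) = 'Z('GL_2(p))
        & 'N_('GL_2(p))(H) / 'Z('GL_2(p)) \isog Aut H],
      Aut H \isog 'D_12,
      legendre p 3 = 1%R ->
        forall x, x \in 'N_('GL_2(p))(H) -> sq_det x
    & legendre p 3 = (-1)%R ->
        forall x, x \in 'N_('GL_2(p))(H) -> (sq_det x <-> induces_inner H x)].
Proof.
have [a [b genH]] := Dic12_gens_isog isoH.
have three_neq0 : (3%:R != 0 :> 'F_p)%R.
  by rewrite -(dvdn_pcharf (pchar_Fp pr_p)); apply/negP=> /(@dvdn_leq _ 3 isT); lia.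
have kerE := ker_conj_aut_Dic genH; have imE := conj_aut_Dic_onto genH three_neq0.
rewrite setTI kerE imE; split.
- split=> //; have := first_isog_loc (conj_aut H) (subxx 'N(H)).
  by rewrite kerE imE.
- exact: Aut_Dic_isog_D12 genH _ (conjg_a_twist genH three_neq0)
                              (conjg_b_twist genH three_neq0).
- by move/legendre_eq1_sq=> sq3 x /(sq_det_normalizer_Dic genH three_neq0 sq3).
- by move/legendre_eqN1_nsq=> nsq3 x /(sq_det_normalizer_DicP genH three_neq0 nsq3).
Qed.
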